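(* Let $\mathscr{B}=\{A,B,C,D\}$ and let $S$ be the substitution $A\mapsto AB$, $B\mapsto AC$, $C\mapsto DB$, $D\mapsto DC$, with associated (Golay-Rudin-Shapiro) subshift $\Xi\subseteq\mathscr{B}^{\mathbb{Z}}$. For $x\in\{A,B,C,D\}$ and $k\in\mathbb{N}$ let $\eta^x_k=(S^k(x))^\infty$ and $\Xi^x_k=\mathrm{Orb}(\eta^x_k)$. Then $\Xi$ is periodically approximable and for each $x\in\{A,B,C,D\}$ the sequence $(\Xi^x_k)_k$ converges to $\Xi$ in the Hausdorff topology.
   Context: $S$ extends to finite words as a homomorphism for concatenation. The associated subshift is $\Xi=\{\xi\in\mathscr{B}^{\mathbb{Z}}:\text{every finite subword of }\xi\text{ is a subword of some }S^n(c),\ n\in\mathbb{N},\ c\in\mathscr{B}\}$. For a finite word $u$, $u^\infty$ is the two-sided periodic sequence repeating $u$. $\mathscr{B}^{\mathbb{Z}}$ has the product topology and shift $(T\xi)(j)=\xi(j-1)$, $\mathrm{Orb}(\eta)=\{T^n\eta:n\in\mathbb{Z}\}$. Subshifts (non-empty closed $T$-invariant subsets) carry the Hausdorff (Vietoris) topology (basis: $\{\Xi:\Xi\cap F=\emptyset,\Xi\cap O\neq\emptyset\ \forall O\in\mathcal{F}\}$, $F$ closed, $\mathcal{F}$ a finite family of open sets). Periodically approximable means being a limit of subshifts $\mathrm{Orb}(\eta)$ with $\eta$ periodic. *)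

From Stdlib Require Import ZArith List Arith.
Import ListNotations.
Open Scope Z_scope.

Inductive letter : Type := A | B | C | D.

Definition config := Z -> letter.
Definition cset := config -> Prop.

Definition subst_word (S : letter -> list letter) (w : list letter) : list letter :=
  flat_map S w.

Definition subst_iter (S : letter -> list letter) (n : nat) (c : letter) : list letter :=
  Nat.iter n (subst_word S) [c].

Definition subword (u w : list letter) : Prop :=
  exists p s, w = p ++ u ++ s.

Definition word_at (xi : config) (i : Z) (n : nat) : list letter :=
  map (fun j => xi (i + Z.of_nat j)) (seq 0 n).

Definition subshift_of (S : letter -> list letter) : cset :=
  fun xi => forall (i : Z) (n : nat),
    exists (k : nat) (c : letter), subword (word_at xi i n) (subst_iter S k c).

Definition GRS (x : letter) : list letter :=
  match x with
  | A => [A; B]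
  | B => [A; C]
  | C => [D; B]
  | D => [D; C]
  end.

Definition GRS_subshift : cset := subshift_of GRS.

Definition per_ext (u : list letter) : config :=
  fun j => nth (Z.to_nat (j mod Z.of_nat (length u))) u A.

Definition shift (xi : config) : config := fun j => xi (j - 1).
Definition shift_pow (n : Z) (xi : config) : config := fun j => xi (j - n).

Definition Orb (eta : config) : cset :=
  fun xi => exists n : Z, xi = shift_pow n eta.

Definition periodic (eta : config) : Prop :=
  exists p : Z, 0 < p /\ forall j, eta (j + p) = eta j.

(* Product topology on B^Z (B discrete): open sets are unions of cylinders. *)
Definition is_open (O : cset) : Prop :=
  forall xi, O xi -> exists n : nat, forall eta,
    (forall j, Z.abs j <= Z.of_nat n -> eta j = xi j) -> O eta.

Definition is_closed (F : cset) : Prop := is_open (fun xi => ~ F xi).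

(* Convergence of a sequence of subshifts in the Vietoris (Hausdorff)
   topology, tested on the subbasic open sets
   {Xi : Xi cap F = empty} (F closed) and {Xi : Xi cap O <> empty} (O open). *)
Definition vietoris_cvg (X : nat -> cset) (Y : cset) : Prop :=
  (forall F, is_closed F -> (forall xi, Y xi -> ~ F xi) ->
     exists N, forall k, (N <= k)%nat -> forall xi, X k xi -> ~ F xi) /\
  (forall O, is_open O -> (exists xi, Y xi /\ O xi) ->
     exists N, forall k, (N <= k)%nat -> exists xi, X k xi /\ O xi).

Definition periodically_approximable (Y : cset) : Prop :=
  exists eta : nat -> config, (forall k, periodic (eta k)) /\
    vietoris_cvg (fun k => Orb (eta k)) Y.

Definition eta_GRS (x : letter) (k : nat) : config := per_ext (subst_iter GRS k x).

From Stdlib Require Import ZArith List Lia Classical ClassicalEpsilon.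
Import ListNotations.
Open Scope Z_scope.

(* Every letter occurs in S^3(y) for each letter y, so every legal word occurs in
   S^k(x) once k is large, and a shift of eta^x_k then meets any cylinder meeting
   Xi.  Conversely S(x) = pq with pqp legal, so every window of eta^x_k of length
   at most 2^(k-1) lies in S^(k-1)(pqp) and is legal.  By compactness of B^Z a
   closed set disjoint from Xi contains no configuration whose central window of
   some radius N is legal, so it misses the orbit of eta^x_k once 2^(k-1) > 2N. *)

Lemma subword_trans u v w : subword u v -> subword v w -> subword u w.
Proof.
  intros [p [s ->]] [p' [s' ->]]. exists (p' ++ p), (s ++ s').
  now rewrite !app_assoc.
Qed.

Lemma in_subword c l : In c l -> subword [c] l.
Proof. intros H. destruct (in_split _ _ H) as [l1 [l2 ->]]. now exists l1, l2. Qed.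

Lemma subword_firstn_skipn L r V : subword (firstn L (skipn r V)) V.
Proof.
  exists (firstn r V), (skipn L (skipn r V)).
  now rewrite firstn_skipn, firstn_skipn.
Qed.

Section Substitution.
Variable sigma : letter -> list letter.

Definition subst_pow (n : nat) (u : list letter) : list letter :=
  Nat.iter n (subst_word sigma) u.

Definition legal (w : list letter) : Prop :=
  exists (k : nat) (c : letter), subword w (subst_iter sigma k c).

Lemma subst_iter_pow k c : subst_iter sigma k c = subst_pow k [c].
Proof. reflexivity. Qed.

Lemma subst_pow_succ n u : subst_pow (S n) u = subst_pow n (subst_word sigma u).
Proof. apply Nat.iter_succ_r. Qed.

Lemma subst_pow_add n m u : subst_pow n (subst_pow m u) = subst_pow (n + m) u.
Proof. unfold subst_pow. now rewrite Nat.iter_add. Qed.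

Lemma subst_pow_app n u v : subst_pow n (u ++ v) = subst_pow n u ++ subst_pow n v.
Proof.
  induction n as [|n IH]; [reflexivity|].
  unfold subst_pow in *. simpl. rewrite IH. apply flat_map_app.
Qed.

Lemma subst_pow_subword n u v : subword u v -> subword (subst_pow n u) (subst_pow n v).
Proof.
  intros [p [s ->]]. exists (subst_pow n p), (subst_pow n s).
  now rewrite !subst_pow_app.
Qed.

Lemma length_subst_word q u :
  (forall a, length (sigma a) = q) -> length (subst_word sigma u) = (q * length u)%nat.
Proof.
  intros Hq. unfold subst_word. induction u as [|a u IH]; simpl; [lia|].
  rewrite length_app, Hq, IH. lia.
Qed.

Lemma length_subst_pow q n u :
  (forall a, length (sigma a) = q) -> length (subst_pow n u) = (q ^ n * length u)%nat.
Proof.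
  intros Hq. induction n as [|n IH]; [simpl; lia|].
  unfold subst_pow in *. simpl. rewrite (length_subst_word q), IH by exact Hq. lia.
Qed.

Lemma legal_subword u v : subword u v -> legal v -> legal u.
Proof. intros Huv [k [c Hv]]. exists k, c. exact (subword_trans _ _ _ Huv Hv). Qed.

Lemma legal_subst_pow n w : legal w -> legal (subst_pow n w).
Proof.
  intros [k [c Hw]]. exists (n + k)%nat, c.
  rewrite subst_iter_pow, <- subst_pow_add. now apply subst_pow_subword.
Qed.

End Substitution.

Lemma word_at_cons xi i n : word_at xi i (S n) = xi i :: word_at xi (i + 1) n.
Proof.
  unfold word_at. simpl. f_equal; [f_equal; lia|].
  rewrite <- seq_shift, map_map. apply map_ext. intros j. f_equal. lia.
Qed.

Lemma word_at_app xi i a b :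
  word_at xi i (a + b) = word_at xi i a ++ word_at xi (i + Z.of_nat a) b.
Proof.
  revert i. induction a as [|a IH]; intros i.
  - simpl. now rewrite Z.add_0_r.
  - simpl plus. rewrite !word_at_cons, IH. simpl. do 3 f_equal. lia.
Qed.

Lemma word_at_subword xi s M i L :
  s <= i -> i + Z.of_nat L <= s + Z.of_nat M ->
  subword (word_at xi i L) (word_at xi s M).
Proof.
  intros Hs HM. set (d := Z.to_nat (i - s)).
  replace M with (d + L + (M - d - L))%nat by lia.
  rewrite !word_at_app.
  exists (word_at xi s d), (word_at xi (s + Z.of_nat (d + L)) (M - d - L)).
  rewrite <- app_assoc. do 3 f_equal. lia.
Qed.

Lemma word_at_shift_pow n xi i L :
  word_at (shift_pow n xi) i L = word_at xi (i - n) L.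
Proof. unfold word_at, shift_pow. apply map_ext. intros j. f_equal. lia. Qed.

Lemma length_word_at xi i L : length (word_at xi i L) = L.
Proof. unfold word_at. now rewrite length_map, length_seq. Qed.

Lemma nth_word_at xi i L t :
  (t < L)%nat -> nth t (word_at xi i L) A = xi (i + Z.of_nat t).
Proof.
  intros Ht. unfold word_at. set (f := fun j : nat => xi (i + Z.of_nat j)).
  rewrite nth_indep with (d' := f 0%nat) by (rewrite length_map, length_seq; lia).
  now rewrite map_nth, seq_nth by lia.
Qed.

Lemma word_at_eq_iff xi eta i L :
  word_at xi i L = word_at eta i L <->
  (forall t, (t < L)%nat -> xi (i + Z.of_nat t) = eta (i + Z.of_nat t)).
Proof.
  split.
  - intros Heq t Ht.
    now rewrite <- (nth_word_at xi i L t Ht), <- (nth_word_at eta i L t Ht), Heq.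
  - intros Hag. apply map_ext_in. intros t Ht. apply in_seq in Ht. apply Hag. lia.
Qed.

Lemma word_at_firstn_skipn xi i L V r :
  (r + L <= length V)%nat ->
  (forall t, (t < L)%nat -> xi (i + Z.of_nat t) = nth (r + t) V A) ->
  word_at xi i L = firstn L (skipn r V).
Proof.
  intros HL Hxi. apply nth_ext with (d := A) (d' := A).
  - rewrite length_word_at, length_firstn, length_skipn. lia.
  - intros t Ht. rewrite length_word_at in Ht.
    rewrite nth_word_at, nth_firstn, nth_skipn by lia.
    destruct (Nat.ltb_spec t L); [auto | lia].
Qed.

Definition central_word (xi : config) (N : nat) : list letter :=
  word_at xi (- Z.of_nat N) (2 * N + 1).

Lemma central_word_eq_iff xi eta N :
  central_word xi N = central_word eta N <->
  (forall j, Z.abs j <= Z.of_nat N -> xi j = eta j).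
Proof.
  unfold central_word. rewrite word_at_eq_iff. split.
  - intros Hag j Hj.
    replace j with (- Z.of_nat N + Z.of_nat (Z.to_nat (j + Z.of_nat N))) by lia.
    apply Hag. lia.
  - intros Hag t Ht. apply Hag. lia.
Qed.

Lemma central_word_subword xi N N' :
  (N <= N')%nat -> subword (central_word xi N) (central_word xi N').
Proof. intros HN. apply word_at_subword; lia. Qed.

Lemma subshift_of_central_words sigma xi :
  (forall N, legal sigma (central_word xi N)) -> subshift_of sigma xi.
Proof.
  intros Hc i L. apply (legal_subword sigma _ (central_word xi (Z.to_nat (Z.abs i) + L))).
  - apply word_at_subword; lia.
  - apply Hc.
Qed.

Lemma per_ext_periodic u : (0 < length u)%nat -> periodic (per_ext u).
Proof.
  intros Hu. exists (Z.of_nat (length u)). split; [lia|].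
  intros j. unfold per_ext. rewrite <- (Z.mul_1_l (Z.of_nat (length u))) at 1.
  now rewrite Z_mod_plus_full.
Qed.

Lemma word_at_per_ext_inside u r L :
  (r + L <= length u)%nat -> word_at (per_ext u) (Z.of_nat r) L = firstn L (skipn r u).
Proof.
  intros HL. apply word_at_firstn_skipn; [exact HL|].
  intros t Ht. unfold per_ext. rewrite Z.mod_small by lia. f_equal. lia.
Qed.

Lemma per_ext_occurrence u w i L :
  subword w u -> length w = L -> exists s, word_at (shift_pow s (per_ext u)) i L = w.
Proof.
  intros [pre [suf ->]] <-. exists (i - Z.of_nat (length pre)).
  rewrite word_at_shift_pow. replace (i - _) with (Z.of_nat (length pre)) by lia.
  rewrite word_at_per_ext_inside by (rewrite !length_app; lia).
  rewrite skipn_app, skipn_all, Nat.sub_diag. simpl.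
  rewrite firstn_app, firstn_all, Nat.sub_diag. simpl. apply app_nil_r.
Qed.

(* A window of length at most |P| starting in the period P ++ Q ends before the
   next copy of P does. *)
Lemma per_ext_window_subword P Q i L :
  (0 < length (P ++ Q))%nat -> (L <= length P)%nat ->
  subword (word_at (per_ext (P ++ Q)) i L) (P ++ Q ++ P).
Proof.
  intros Hpos HL. rewrite app_assoc.
  set (u := P ++ Q) in *. set (n := Z.of_nat (length u)).
  assert (Hn : n = Z.of_nat (length P + length Q)) by (unfold n, u; now rewrite length_app).
  assert (Hr : 0 <= i mod n < n) by (apply Z.mod_pos_bound; lia).
  rewrite (word_at_firstn_skipn _ _ _ (u ++ P) (Z.to_nat (i mod n)));
    [apply subword_firstn_skipn | rewrite length_app; lia |].
  intros t Ht. unfold per_ext. fold n. rewrite <- Zplus_mod_idemp_l.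
  destruct (Z.lt_ge_cases (i mod n + Z.of_nat t) n) as [Hin | Hwrap].
  - rewrite Z.mod_small, app_nth1 by lia. f_equal. lia.
  - replace (i mod n + Z.of_nat t) with (i mod n + Z.of_nat t - n + 1 * n) by lia.
    rewrite Z_mod_plus_full, Z.mod_small by lia.
    rewrite app_nth2 by lia.
    unfold u. rewrite length_app, app_nth1 by lia. f_equal. lia.
Qed.

Lemma letter_pigeonhole (Q : letter -> nat -> Prop) :
  (forall a N N', (N <= N')%nat -> Q a N' -> Q a N) ->
  (forall N, exists a, Q a N) -> exists a, forall N, Q a N.
Proof.
  intros Qanti Qinf. apply NNPP. intros Hnone.
  assert (Hbound : forall a, exists N, ~ Q a N).
  { intros a. apply not_all_ex_not. intros Ha. apply Hnone. now exists a. }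
  destruct (Hbound A) as [NA HA], (Hbound B) as [NB HB],
    (Hbound C) as [NC HC], (Hbound D) as [ND HD].
  destruct (Qinf (NA + NB + NC + ND)%nat) as [[] Ha];
    [apply HA | apply HB | apply HC | apply HD]; (eapply Qanti; [|exact Ha]); lia.
Qed.

Definition agree_on (P : Z -> Prop) (xi eta : config) : Prop :=
  forall j, P j -> xi j = eta j.

Definition ball (m : nat) (j : Z) : Prop := Z.abs j < Z.of_nat m.

Definition set_at (xi : config) (p : Z) (a : letter) : config :=
  fun j => if Z.eq_dec j p then a else xi j.

Lemma is_closed_and F F' :
  is_closed F -> is_closed F' -> is_closed (fun xi => F xi /\ F' xi).
Proof.
  intros HF HF' xi Hxi. destruct (classic (F xi)) as [Hin | Hout].
  - destruct (HF' xi (fun H => Hxi (conj Hin H))) as [n Hn].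
    exists n. intros eta Heta [_ H']. exact (Hn eta Heta H').
  - destruct (HF xi Hout) as [n Hn].
    exists n. intros eta Heta [H _]. exact (Hn eta Heta H).
Qed.

Lemma is_closed_local (P : cset) n :
  (forall xi eta, (forall j, Z.abs j <= Z.of_nat n -> eta j = xi j) -> P eta -> P xi) ->
  is_closed P.
Proof.
  intros Hloc xi Hxi. exists n. intros eta Heta HP. exact (Hxi (Hloc _ _ Heta HP)).
Qed.

Section CantorIntersection.
Variable K : nat -> cset.
Hypothesis K_antitone : forall N N' xi, (N <= N')%nat -> K N' xi -> K N xi.
Hypothesis K_nonempty : forall N, exists xi, K N xi.
Hypothesis K_closed : forall N, is_closed (K N).

Definition extendable (P : Z -> Prop) (u : config) : Prop :=
  forall N, exists xi, K N xi /\ agree_on P xi u.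

(* Koenig's step: some letter at p keeps u extendable for infinitely many N,
   hence for all N since K is antitone. *)
Lemma extendable_set_at P u p :
  extendable P u -> exists a, extendable (fun j => P j \/ j = p) (set_at u p a).
Proof.
  intros Hu.
  apply (letter_pigeonhole
    (fun a N => exists xi, K N xi /\ agree_on (fun j => P j \/ j = p) xi (set_at u p a))).
  - intros a N N' HN [xi [HK Hag]]. exists xi. eauto.
  - intros N. destruct (Hu N) as [xi [HK Hag]]. exists (xi p), xi. split; [exact HK|].
    intros j Hj. unfold set_at. destruct (Z.eq_dec j p) as [-> | Hne]; [reflexivity|].
    destruct Hj; [auto | contradiction].
Qed.

Lemma extendable_ball_succ m u :
  extendable (ball m) u -> exists v, extendable (ball (S m)) v /\ agree_on (ball m) v u.
Proof.
  intros Hu.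
  destruct (extendable_set_at _ _ (- Z.of_nat m) Hu) as [a Ha].
  destruct (extendable_set_at _ _ (Z.of_nat m) Ha) as [b Hb].
  exists (set_at (set_at u (- Z.of_nat m) a) (Z.of_nat m) b). split.
  - intros N. destruct (Hb N) as [xi [HK Hag]]. exists xi. split; [exact HK|].
    intros j Hj. apply Hag. unfold ball in *. lia.
  - intros j Hj. unfold ball, set_at in *.
    destruct (Z.eq_dec j (Z.of_nat m)); [lia|].
    destruct (Z.eq_dec j (- Z.of_nat m)); [lia | reflexivity].
Qed.

Definition refine_ball (m : nat) (u : config) : config :=
  epsilon (inhabits u) (fun v => extendable (ball (S m)) v /\ agree_on (ball m) v u).

Fixpoint approx (m : nat) : config :=
  match m with O => fun _ => A | S m => refine_ball m (approx m) end.

Lemma refine_ball_spec m u : extendable (ball m) u ->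
  extendable (ball (S m)) (refine_ball m u) /\ agree_on (ball m) (refine_ball m u) u.
Proof. intros Hu. unfold refine_ball. apply epsilon_spec, extendable_ball_succ, Hu. Qed.

Lemma approx_extendable m : extendable (ball m) (approx m).
Proof.
  induction m as [|m IH].
  - intros N. destruct (K_nonempty N) as [xi HK]. exists xi. split; [exact HK|].
    intros j Hj. unfold ball in Hj. lia.
  - apply refine_ball_spec, IH.
Qed.

Lemma approx_agree m d : agree_on (ball m) (approx (d + m)) (approx m).
Proof.
  induction d as [|d IH]; intros j Hj; [reflexivity|]. simpl.
  rewrite (proj2 (refine_ball_spec _ _ (approx_extendable _))) by (unfold ball in *; lia).
  apply IH, Hj.
Qed.

Definition limit : config := fun j => approx (S (Z.to_nat (Z.abs j))) j.

Lemma limit_agree m : agree_on (ball m) limit (approx m).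
Proof.
  intros j Hj. unfold limit, ball in *.
  replace m with (m - S (Z.to_nat (Z.abs j)) + S (Z.to_nat (Z.abs j)))%nat by lia.
  symmetry. apply approx_agree. unfold ball. lia.
Qed.

Theorem cantor_intersection : exists xi, forall N, K N xi.
Proof.
  exists limit. intros N. apply NNPP. intros Hout.
  destruct (K_closed N limit Hout) as [n Hn].
  destruct (approx_extendable (S n) N) as [xi [HK Hag]].
  apply (Hn xi); [|exact HK].
  intros j Hj. rewrite Hag by (unfold ball; lia).
  symmetry. apply limit_agree. unfold ball. lia.
Qed.

End CantorIntersection.

Lemma GRS_square_legal x : exists p q, GRS x = [p; q] /\ legal GRS [p; q; p].
Proof.
  destruct x.
  - exists A, B. split; [reflexivity|]. exists 2%nat, A, [], [C]. reflexivity.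
  - exists A, C. split; [reflexivity|]. exists 3%nat, A, [A; B], [B; D; B]. reflexivity.
  - exists D, B. split; [reflexivity|]. exists 3%nat, D, [D; C], [C; A; C]. reflexivity.
  - exists D, C. split; [reflexivity|]. exists 2%nat, D, [], [B]. reflexivity.
Qed.

Lemma length_GRS_pow n u : length (subst_pow GRS n u) = (2 ^ n * length u)%nat.
Proof. apply length_subst_pow. now intros []. Qed.

Lemma GRS_letter_occurs m y c : (3 <= m)%nat -> subword [c] (subst_pow GRS m [y]).
Proof.
  intros Hm. revert y. induction Hm as [|m Hm IH]; intros y.
  - destruct y, c; apply in_subword; cbn; tauto.
  - destruct (GRS_square_legal y) as [p [q [Hy _]]].
    rewrite subst_pow_succ. simpl subst_word. rewrite Hy.
    apply (subword_trans _ _ _ (IH p)), subst_pow_subword. now exists [], [q].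
Qed.

Lemma GRS_legal_eventually_everywhere w :
  legal GRS w -> exists j, forall k x, (j <= k)%nat -> subword w (subst_iter GRS k x).
Proof.
  intros [j [c Hw]]. exists (j + 3)%nat. intros k x Hk.
  apply (subword_trans _ _ _ Hw). rewrite !subst_iter_pow.
  replace k with (j + (k - j))%nat by lia. rewrite <- subst_pow_add.
  apply subst_pow_subword, GRS_letter_occurs. lia.
Qed.

Lemma eta_GRS_periodic x k : periodic (eta_GRS x k).
Proof.
  apply per_ext_periodic. rewrite subst_iter_pow, length_GRS_pow.
  pose proof (Nat.pow_nonzero 2 k). simpl. lia.
Qed.

Lemma eta_GRS_window_legal x k i L :
  (L <= 2 ^ k)%nat -> legal GRS (word_at (eta_GRS x (S k)) i L).
Proof.
  intros HL. destruct (GRS_square_legal x) as [p [q [Hx Hpqp]]].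
  assert (Hsplit : subst_iter GRS (S k) x = subst_pow GRS k [p] ++ subst_pow GRS k [q]).
  { rewrite subst_iter_pow, subst_pow_succ. simpl subst_word. rewrite Hx.
    apply (subst_pow_app GRS k [p] [q]). }
  pose proof (Nat.pow_nonzero 2 k).
  unfold eta_GRS. rewrite Hsplit.
  apply (legal_subword GRS _ (subst_pow GRS k ([p] ++ [q] ++ [p]))).
  - rewrite !subst_pow_app. apply per_ext_window_subword;
      rewrite ?length_app, !length_GRS_pow; simpl; lia.
  - apply legal_subst_pow, Hpqp.
Qed.

Lemma GRS_orbits_meet_open x O :
  is_open O -> (exists xi, GRS_subshift xi /\ O xi) ->
  exists N, forall k, (N <= k)%nat -> exists xi, Orb (eta_GRS x k) xi /\ O xi.
Proof.
  intros HO [xi [Hxi HOxi]]. destruct (HO xi HOxi) as [n Hn].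
  destruct (GRS_legal_eventually_everywhere (central_word xi n) (Hxi _ _)) as [j Hj].
  exists j. intros k Hk.
  destruct (per_ext_occurrence _ _ (- Z.of_nat n) _ (Hj k x Hk) (length_word_at _ _ _))
    as [s Hs].
  exists (shift_pow s (eta_GRS x k)). split; [now exists s|].
  apply Hn. intros i Hi. now apply (central_word_eq_iff _ _ n).
Qed.

Lemma GRS_orbits_avoid_closed x F :
  is_closed F -> (forall xi, GRS_subshift xi -> ~ F xi) ->
  exists N, forall k, (N <= k)%nat -> forall xi, Orb (eta_GRS x k) xi -> ~ F xi.
Proof.
  intros HF Hdisj.
  destruct (classic (exists N, forall xi, F xi -> ~ legal GRS (central_word xi N)))
    as [[N HN] | Hlegal].
  - exists (S (2 * N + 1)). intros [|k] Hk xi [s ->] HFxi; [lia|].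
    apply (HN _ HFxi). unfold central_word. rewrite word_at_shift_pow.
    apply eta_GRS_window_legal.
    pose proof (Nat.pow_gt_lin_r 2 (2 * N + 1)).
    pose proof (Nat.pow_le_mono_r 2 (2 * N + 1) k). lia.
  - set (K N xi := F xi /\ legal GRS (central_word xi N)).
    destruct (cantor_intersection K) as [xi Hxi].
    + intros N N' xi HN [HFxi Hl]. split; [exact HFxi|].
      exact (legal_subword GRS _ _ (central_word_subword xi N N' HN) Hl).
    + intros N. apply NNPP. intros Hempty. apply Hlegal. exists N.
      intros xi HFxi Hl. apply Hempty. now exists xi.
    + intros N. apply is_closed_and; [exact HF|]. apply (is_closed_local _ N).
      intros xi eta Hag. now rewrite (proj2 (central_word_eq_iff eta xi N) Hag).
    + exfalso. apply (Hdisj xi); [|apply (Hxi 0%nat)].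
      apply subshift_of_central_words. intros N. apply Hxi.
Qed.

Lemma eta_GRS_cvg x : vietoris_cvg (fun k => Orb (eta_GRS x k)) GRS_subshift.
Proof. split; [apply GRS_orbits_avoid_closed | apply GRS_orbits_meet_open]. Qed.

Theorem proposition15 :
  periodically_approximable GRS_subshift /\
  forall x : letter, vietoris_cvg (fun k => Orb (eta_GRS x k)) GRS_subshift.
Proof.
  split.
  - exists (eta_GRS A). split; [apply eta_GRS_periodic | apply eta_GRS_cvg].
  - exact eta_GRS_cvg.
Qed.
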